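(* Let $P$ be a Poisson tensor on $\mathbb{R}^3$, let $H\in C^\infty(\mathbb{R}^3)$, let $S\in C^\infty(\mathbb{R}^3)$ satisfy $PdS=0$, and let $g$ be the symmetric tensor with components $g^{ij}=H^iH^j-\delta^{ij}\sum_k H^kH^k$. Let $x(t)$ be a solution of $\dot{x}=PdH+gdS$ with $x(0)=x_0$. If $d_{x_0}S=0$, then $d_{x(t)}S=0$ for all times $t$.
   Context: $\mathbb{R}^3$ carries the standard Euclidean metric, used to identify tangent and cotangent spaces with $\mathbb{R}^3$; $H^i=H_i=\partial H/\partial x^i$. A Poisson tensor is a skew-symmetric bivector field satisfying the Jacobi identity. *)

From HB Require Import structures.
From mathcomp Require Import all_boot all_order all_algebra.
From mathcomp Require Import all_classical all_reals all_analysis.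
Set Implicit Arguments. Unset Strict Implicit. Unset Printing Implicit Defensive.
Import Order.TTheory GRing.Theory Num.Theory.
Import numFieldNormedType.Exports.
Local Open Scope classical_set_scope.
Local Open Scope ring_scope.

Section Defs.
Variable R : realType.
Notation V := 'rV[R]_3.

Definition evec (i : 'I_3) : V := delta_mx 0 i.

Definition partial (i : 'I_3) (f : V -> R) : V -> R :=
  fun x => 'D_(evec i) f x.

Fixpoint iter_partial (l : seq 'I_3) (f : V -> R) : V -> R :=
  if l is i :: l' then partial i (iter_partial l' f) else f.

Definition smooth (f : V -> R) : Prop :=
  forall (l : seq 'I_3) (x : V), differentiable (iter_partial l f) x.

(* differential (gradient, via the Euclidean metric) dF = (F_1, F_2, F_3) *)
Definition grad (f : V -> R) (x : V) : V := \row_i partial i f x.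

Definition poisson_tensor (P : V -> 'M[R]_3) : Prop :=
  [/\ forall i j, smooth (fun x => P x i j),
      forall x i j, P x j i = - P x i j &
      forall x i j k,
        \sum_(l < 3) (P x i l * partial l (fun y => P y j k) x
                    + P x j l * partial l (fun y => P y k i) x
                    + P x k l * partial l (fun y => P y i j) x) = 0].

Definition tensor_apply (T : 'M[R]_3) (v : V) : V :=
  \row_i \sum_(j < 3) T i j * v 0 j.

Definition gtensor (H : V -> R) (x : V) : 'M[R]_3 :=
  \matrix_(i, j) (grad H x 0 i * grad H x 0 j
                  - (i == j)%:R * \sum_(k < 3) grad H x 0 k ^+ 2).

Definition metriplectic_field (P : V -> 'M[R]_3) (H S : V -> R) (x : V) : V :=
  tensor_apply (P x) (grad H x) + tensor_apply (gtensor H x) (grad S x).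

End Defs.

From HB Require Import structures.
From mathcomp Require Import all_boot all_order all_algebra.
From mathcomp Require Import all_classical all_reals all_analysis.
From mathcomp Require Import ring.
Set Implicit Arguments. Unset Strict Implicit. Unset Printing Implicit Defensive.
Import Order.TTheory GRing.Theory Num.Theory.
Import numFieldNormedType.Exports.
Local Open Scope classical_set_scope.
Local Open Scope ring_scope.

(* Along a solution put y_k(t) = d_k S(x(t)).  Differentiating P dS = 0 in the
   direction e_k, and using the skew-symmetry of P and the symmetry of the
   Hessian of S (Schwarz), turns y' = Hess S (P dH + g dS) into a linear system
   y' = B(t) y with continuous coefficients.  Then u = |y|^2 satisfies
   |u'| <= K u on every compact time interval, and Gronwall's inequality
   propagates y(0) = 0 both forwards and backwards in time. *)

Section Gronwall.
Variable R : realType.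

Lemma is_derive_expRM (c t : R) :
  is_derive t 1 (fun s => expR (c * s)) (expR (c * t) * c).
Proof.
apply: (@is_derive1_comp _ expR ( *%R c)); apply: is_derive_eq.
by rewrite [_%:A]mulr1.
Qed.

Lemma expR_weighted_le (u du : R -> R) (c a b : R) : a <= b ->
  (forall t, t \in `[a, b] -> is_derive t 1 u (du t)) ->
  (forall t, t \in `]a, b[ -> du t <= c * u t) ->
  u b * expR (- c * b) <= u a * expR (- c * a).
Proof.
move=> ab du_u du_le.
pose v := u * (fun s => expR (- c * s)).
have dv t : t \in `[a, b] -> is_derive t 1 v ((du t - c * u t) * expR (- c * t)).
  move=> tab.
  apply: (is_derive_eq (is_deriveM (du_u t tab) (is_derive_expRM (- c) t))).
  by rewrite /GRing.scale /=; ring.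
have cv : {within `[a, b], continuous v}.
  by apply: derivable_within_continuous => t /dv [].
apply: (ler0_derive1_le_cc _ _ cv); rewrite ?in_itv /= ?lexx ?ab //.
- by move=> t /subset_itv_oo_cc /dv [].
- move=> s sab; rewrite derive1E; have [_ ->] := dv s (subset_itv_oo_cc sab).
  by rewrite mulr_le0_ge0 ?expR_ge0 // subr_le0 du_le.
Qed.

Lemma gronwall_vanish (u du : R -> R) (K a b : R) : a <= b ->
  (forall t, t \in `[a, b] -> is_derive t 1 u (du t)) ->
  (forall t, t \in `[a, b] -> 0 <= u t /\ `|du t| <= K * u t) ->
  u a = 0 <-> u b = 0.
Proof.
move=> ab du_u bnd.
have [ua_ge0 _] := bnd a ltac:(by rewrite in_itv /= lexx ab).
have [ub_ge0 _] := bnd b ltac:(by rewrite in_itv /= lexx ab).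
split=> u0.
- have := @expR_weighted_le u du K a b ab du_u.
  rewrite u0 mul0r => le0.
  apply/eqP; rewrite eq_le ub_ge0 andbT -(pmulr_lle0 _ (expR_gt0 (- K * b))).
  apply: le0 => t /subset_itv_oo_cc /bnd [_].
  by move=> /(le_trans _); apply; rewrite ler_norm.
- have := @expR_weighted_le (- u) (- du) (- K) a b ab.
  move=> /(_ (fun t tab => is_deriveN (du_u t tab))).
  rewrite !opprK !opprfctE u0 oppr0 mul0r mulNr oppr_ge0 => le0.
  apply/eqP; rewrite eq_le ua_ge0 andbT -(pmulr_lle0 _ (expR_gt0 (K * a))).
  apply: le0 => t /subset_itv_oo_cc /bnd [_].
  by rewrite mulrNN => /(le_trans _); apply; rewrite -normrN ler_norm.
Qed.
End Gronwall.

Section LinearSystem.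
Variable R : realType.

Lemma normrM_le_sumsq n (y : 'I_n -> R) k m : `|y k * y m| <= \sum_i y i ^+ 2.
Proof.
have le_sum i : y i ^+ 2 <= \sum_j y j ^+ 2.
  by rewrite (bigD1 i) //= lerDl sumr_ge0 // => j _; rewrite sqr_ge0.
rewrite normrM; wlog le_km : k m / `|y k| <= `|y m|.
  by move=> wl; have [/wl//|/ltW/wl] := lerP `|y k| `|y m|; rewrite mulrC.
by rewrite (le_trans (ler_wpM2r _ le_km)) // -expr2 real_normK ?num_real.
Qed.

Lemma norm_quadratic_form_le n (B : 'I_n -> 'I_n -> R) (y : 'I_n -> R) :
  `|\sum_k \sum_m B k m * (y k * y m)|
    <= (\sum_k \sum_m `|B k m|) * \sum_i y i ^+ 2.
Proof.
rewrite (le_trans (ler_norm_sum _ _ _)) // mulr_suml ler_sum // => k _.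
rewrite (le_trans (ler_norm_sum _ _ _)) // mulr_suml ler_sum // => m _.
by rewrite normrM ler_wpM2l ?normrM_le_sumsq.
Qed.

Lemma sumsq_eq0 n (y : 'I_n -> R) : \sum_i y i ^+ 2 = 0 -> forall k, y k = 0.
Proof.
move=> /eqP; rewrite psumr_eq0 => [/allP y0 k|i _]; last exact: sqr_ge0.
by apply/eqP; rewrite -sqrf_eq0; apply: (implyP (y0 k (mem_index_enum k))).
Qed.

Lemma linear_system_vanish n (y : 'I_n -> R -> R) (B : 'I_n -> 'I_n -> R -> R)
    (I : set R) (t0 : R) :
  is_interval I -> I t0 ->
  (forall k m t, I t -> {for t, continuous (B k m)}) ->
  (forall k t, I t -> is_derive t 1 (y k) (\sum_m B k m t * y m t)) ->
  (forall k, y k t0 = 0) -> forall k t, I t -> y k t = 0.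
Proof.
move=> iI It0 cB dy y0 k t It.
pose u := \sum_k y k ^+ 2.
have uE s : u s = \sum_k y k s ^+ 2 by rewrite /u fct_sumE.
pose du s := 2 * \sum_k \sum_m B k m s * (y k s * y m s).
have du_u s : I s -> is_derive s 1 u (du s).
  move=> Is.
  apply: (is_derive_eq (is_derive_sum (fun i => is_deriveX 2 (dy i s Is)))).
  rewrite /du mulr_sumr; apply: eq_bigr => i _.
  rewrite /GRing.scale /= expr1 mulr_sumr mulr_sumr; apply: eq_bigr => j _.
  ring.
pose C s := \sum_k \sum_m `|B k m s|.
have cC s : I s -> {for s, continuous C}.
  move=> Is; apply: cvg_big => [|i _]; first exact: add_continuous.
  apply: cvg_big => [|j _]; first exact: add_continuous.
  exact: continuous_comp (cB i j s Is) (@norm_continuous _ _ _).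
have u_vanish a b : a <= b -> I a -> I b -> u a = 0 <-> u b = 0.
  move=> ab Ia Ib; have abI s : s \in `[a, b] -> I s.
    by rewrite in_itv /= => /(iI a b Ia Ib).
  have [c cab Cmax] :
      exists2 c, c \in `[a, b] & forall s, s \in `[a, b] -> C s <= C c.
    apply: EVT_max => //.
    by apply: continuous_in_subspaceT => s /[1!inE] /abI /cC.
  apply: (@gronwall_vanish _ u du (2 * C c)) => // [s /abI /du_u // | s sab].
  split; first by rewrite uE sumr_ge0 // => i _; rewrite sqr_ge0.
  rewrite /du normrM ger0_norm // -mulrA ler_wpM2l // uE.
  rewrite (le_trans (norm_quadratic_form_le _ _)) // ler_wpM2r ?Cmax //.
  by rewrite sumr_ge0 // => i _; rewrite sqr_ge0.
have u0 : u t0 = 0 by rewrite uE big1 // => i _; rewrite y0 expr0n.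
apply: (sumsq_eq0 (y := y ^~ t)); rewrite -uE.
have [t0t|/ltW tt0] := lerP t0 t; first exact/(u_vanish _ _ t0t It0 It).
exact/(u_vanish _ _ tt0 It It0).
Qed.
End LinearSystem.

Section MixedPartials.
Variables (R : realType) (V : normedModType R).

Lemma is_derive_line (f : V -> R) (p v : V) (t : R) :
  derivable f (t *: v + p) v ->
  is_derive t 1 (fun s => f (s *: v + p)) ('D_v f (t *: v + p)).
Proof.
move=> df.
have E : (fun h : R => h^-1 *: (((fun s => f (s *: v + p)) \o shift t) (h *: 1)
                                  - f (t *: v + p)))
        = (fun h => h^-1 *: ((f \o shift (t *: v + p)) (h *: v) - f (t *: v + p))).
  by apply/funext => h; rewrite /= [h *: 1]mulr1 scalerDl addrA.
by split; rewrite /derivable /derive E.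
Qed.

Definition second_difference (f : V -> R) (u v p : V) (h : R) :=
  f (h *: u + (h *: v + p)) - f (h *: u + p) - f (h *: v + p) + f p.

Lemma second_differenceC f u v p h :
  second_difference f u v p h = second_difference f v u p h.
Proof. by rewrite /second_difference [h *: u + _]addrCA; ring. Qed.

Lemma second_difference_mvt f u v p h :
  (forall y, derivable f y u) -> (forall y, derivable ('D_u f) y v) -> 0 < h ->
  exists a b, [/\ a \in `]0, h[, b \in `]0, h[ &
    second_difference f u v p h = 'D_v ('D_u f) (b *: v + (a *: u + p)) * (h * h)].
Proof.
move=> fu fuv h0.
pose phi s := f (s *: u + (h *: v + p)) - f (s *: u + p).
have dphi (s : R) : is_derive s 1 phi
    ('D_u f (s *: u + (h *: v + p)) - 'D_u f (s *: u + p)).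
  by apply: is_deriveB; apply: is_derive_line.
have cphi : {within `[0, h], continuous phi}.
  by apply: derivable_within_continuous => s _; have [] := dphi s.
have [a a0h Ea] := MVT h0 (fun s _ => dphi s) cphi.
pose psi r := 'D_u f (r *: v + (a *: u + p)).
have dpsi (r : R) : is_derive r 1 psi ('D_v ('D_u f) (r *: v + (a *: u + p))).
  exact: is_derive_line.
have cpsi : {within `[0, h], continuous psi}.
  by apply: derivable_within_continuous => r _; have [] := dpsi r.
have [b b0h Eb] := MVT h0 (fun r _ => dpsi r) cpsi.
exists a, b; split => //.
move: Ea Eb; rewrite /phi /psi !scale0r !add0r subr0.
rewrite [a *: u + (_ + _)]addrCA => Ea Eb.
rewrite /second_difference -addrA [- _ + _]addrC -[f p - _]opprB Ea Eb -mulrA.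
by congr (_ * _).
Qed.

Lemma continuous_at_eq (g1 g2 : V -> R) (p : V) :
  {for p, continuous g1} -> {for p, continuous g2} ->
  (forall d, 0 < d ->
     exists q1 q2, [/\ `|p - q1| < d, `|p - q2| < d & g1 q1 = g2 q2]) ->
  g1 p = g2 p.
Proof.
move=> /cvgrPdist_lt c1 /cvgrPdist_lt c2 meet.
apply/eqP; rewrite -subr_eq0 -normr_le0; apply/ler_addgt0Pr => e e0.
have e20 : 0 < e / 2 by rewrite divr_gt0.
have [d /= d0 near_p] := (nbhs_normP _ _).1 (filterI (c1 _ e20) (c2 _ e20)).
have [q1 [q2 [/near_p [+ _] /near_p [_ +] E]]] := meet d d0.
rewrite add0r E => near1 near2.
rewrite (le_trans (ler_distD (g2 q2) _ _)) // [`|_ - g2 p|]distrC.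
by rewrite [e]splitr ltW // ltrD.
Qed.

Lemma derive_sym (f : V -> R) (u v p : V) :
  (forall y, derivable f y u) -> (forall y, derivable f y v) ->
  (forall y, derivable ('D_u f) y v) -> (forall y, derivable ('D_v f) y u) ->
  {for p, continuous ('D_v ('D_u f))} -> {for p, continuous ('D_u ('D_v f))} ->
  'D_v ('D_u f) p = 'D_u ('D_v f) p.
Proof.
move=> fu fv fuv fvu cuv cvu; apply: (continuous_at_eq cuv cvu) => d d0.
pose h := d / (`|u| + `|v| + 1).
have h0 : 0 < h by rewrite divr_gt0 // ltr_wpDl // addr_ge0.
have close (a b : R) (w1 w2 : V) : a \in `]0, h[ -> b \in `]0, h[ ->
    `|w1| + `|w2| = `|u| + `|v| -> `|p - (b *: w2 + (a *: w1 + p))| < d.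
  rewrite !in_itv /= => /andP[a0 ah] /andP[b0 bh] w12.
  rewrite addrA opprD addrCA subrr addr0 normrN.
  rewrite (le_lt_trans (ler_normD _ _)) // !normrZ !gtr0_norm //.
  have -> : d = h * (`|u| + `|v| + 1).
    by rewrite /h divfK // gt_eqF // ltr_wpDl // addr_ge0.
  rewrite -w12 mulrDr mulr1 ltr_pwDr // addrC mulrDr.
  by rewrite lerD // ler_wpM2r // ltW.
have [a [b [a0h b0h Euv]]] := second_difference_mvt p fu fuv h0.
have [a' [b' [a0h' b0h' Evu]]] := second_difference_mvt p fv fvu h0.
exists (b *: v + (a *: u + p)), (b' *: u + (a' *: v + p)); split.
- exact: close.
- exact: close (addrC _ _).
- rewrite second_differenceC Euv in Evu.
  by apply: (mulIf (mulf_neq0 (lt0r_neq0 h0) (lt0r_neq0 h0))).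
Qed.
End MixedPartials.

Section RowCalculus.
Variable R : realType.

Lemma is_derive_comp (V W : normedModType R) (G : V -> W) (c : R -> V)
    (t : R) (v : V) :
  is_derive t 1 c v -> differentiable G (c t) ->
  is_derive t 1 (G \o c) ('d G (c t) v).
Proof.
move=> [dc <-] dG; have dc' : differentiable c t by apply/derivable1_diffP.
have dGc : differentiable (G \o c) t by exact: differentiable_comp.
apply: DeriveDef; first exact/derivable1_diffP.
by rewrite (deriveE _ dGc) (diff_comp dc' dG) /= [in RHS]deriveE.
Qed.

Lemma diff_rowE n (G : 'rV[R]_n -> R) (p v : 'rV[R]_n) : differentiable G p ->
  'd G p v = \sum_j v 0 j * 'D_(delta_mx 0 j) G p.
Proof.
move=> dG; rewrite [in LHS](row_sum_delta v) linear_sum; apply: eq_bigr => j _.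
by rewrite linearZ /= deriveE.
Qed.

Lemma continuous_iter_partial (f : 'rV[R]_3 -> R) l :
  smooth f -> continuous (iter_partial l f).
Proof. by move=> sf z; apply/differentiable_continuous/sf. Qed.

Lemma smooth_partialC (f : 'rV[R]_3 -> R) (j k : 'I_3) (z : 'rV[R]_3) :
  smooth f -> partial j (partial k f) z = partial k (partial j f) z.
Proof.
move=> sf; have d1 i y : derivable f y (evec R i).
  exact/diff_derivable/(sf [::]).
have d2 i l y : derivable ('D_(evec R i) f) y (evec R l).
  exact/diff_derivable/(sf [:: i]).
by apply: derive_sym => //; exact: continuous_iter_partial [:: _; _] sf z.
Qed.
End RowCalculus.

Lemma sum_contractC (R : comPzRingType) n (F : 'I_n -> 'I_n -> R)
    (a b : 'I_n -> R) :
  \sum_j (\sum_i F j i * a i) * b j = \sum_i (\sum_j F j i * b j) * a i.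
Proof.
under eq_bigr do rewrite mulr_suml; under [RHS]eq_bigr do rewrite mulr_suml.
rewrite exchange_big; apply: eq_bigr => i _; apply: eq_bigr => j _.
by rewrite mulrAC.
Qed.

Section Metriplectic.
Variables (R : realType) (P : 'rV[R]_3 -> 'M[R]_3) (H S : 'rV[R]_3 -> R).
Hypotheses (smoothP : forall i j, smooth (fun x => P x i j))
  (skewP : forall x i j, P x j i = - P x i j)
  (smoothH : smooth H) (smoothS : smooth S)
  (PdS0 : forall y, tensor_apply (P y) (grad S y) = 0).

Definition transport_coef (k m : 'I_3) (z : 'rV[R]_3) : R :=
  \sum_i partial k (fun y => P y i m) z * partial i H z
  + \sum_j gtensor H z j m * partial j (partial k S) z.

Lemma PdS_hessian i k z :
  \sum_j P z i j * partial k (partial j S) z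
  = - \sum_j partial k (fun y => P y i j) z * partial j S z.
Proof.
have PdS0_i : (fun y => \sum_j P y i j * partial j S y) = cst 0.
  apply/funext => y; rewrite /cst.
  have := congr1 (fun M : 'rV_3 => M 0 i) (PdS0 y).
  rewrite /tensor_apply !mxE => E; rewrite -[RHS]E.
  by apply: eq_bigr => j _; rewrite mxE.
have dPS j : differentiable ((fun y => P y i j) * partial j S) z.
  exact: differentiableM (smoothP i j [::] z) (smoothS [:: j] z).
have := congr1 (fun g => partial k g z) PdS0_i.
have -> : (fun y => \sum_j P y i j * partial j S y)
          = \sum_j ((fun y => P y i j) * partial j S) by rewrite fct_sumE.
rewrite /partial derive_sum => [|j]; last exact: diff_derivable.
rewrite derive_cst (eq_bigr (fun j => P z i j * 'D_(evec R k) ('D_(evec R j) S) z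
    + 'D_(evec R k) (fun y => P y i j) z * 'D_(evec R j) S z)) => [|j _].
  by rewrite big_split /= => /eqP; rewrite addr_eq0 => /eqP.
rewrite deriveM; first by congr (_ + _); apply: mulrC.
- exact/diff_derivable/(smoothP i j [::]).
- exact/diff_derivable/(smoothS [:: j]).
Qed.

Lemma metriplectic_field_hessian k z :
  \sum_j metriplectic_field P H S z 0 j * partial j (partial k S) z
  = \sum_m transport_coef k m z * partial m S z.
Proof.
have fieldE j : metriplectic_field P H S z 0 j
    = \sum_i P z j i * partial i H z + \sum_m gtensor H z j m * partial m S z.
  rewrite /metriplectic_field /tensor_apply !mxE.
  by congr (_ + _); apply: eq_bigr => i _; rewrite /grad mxE.
under eq_bigr do rewrite fieldE mulrDl.
under [RHS]eq_bigr do rewrite mulrDl.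
rewrite !big_split /= [X in _ + X]sum_contractC; congr (_ + _).
rewrite sum_contractC [RHS]sum_contractC; apply: eq_bigr => i _; congr (_ * _).
rewrite -[RHS]opprK -PdS_hessian -sumrN; apply: eq_bigr => j _.
by rewrite skewP mulNr smooth_partialC.
Qed.

Lemma continuous_transport_coef k m : continuous (transport_coef k m).
Proof.
have cont_sum (F : 'I_3 -> 'rV[R]_3 -> R) : (forall i, continuous (F i)) ->
    continuous (fun z => \sum_i F i z).
  by move=> cF; apply: continuous_big => //; exact: add_continuous.
have cH i : continuous (partial i H) by exact: continuous_iter_partial [:: i] _.
move=> z; apply: (@continuousD _ _ _
  (fun z => \sum_i partial k (fun y => P y i m) z * partial i H z)
  (fun z => \sum_j gtensor H z j m * partial j (partial k S) z)).
- apply: (cont_sum _) => i w; apply: continuousM; last exact: cH.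
  exact: continuous_iter_partial [:: k] (smoothP i m) w.
- apply: (cont_sum _) => j w.
  apply: continuousM; last exact: continuous_iter_partial [:: j; k] smoothS w.
  have -> : (fun y => gtensor H y j m) = (fun y => partial j H y * partial m H y
      - (j == m)%:R * \sum_l partial l H y * partial l H y).
    apply/funext => y; rewrite /gtensor /grad !mxE.
    by congr (_ - _ * _); apply: eq_bigr => l _; rewrite mxE expr2.
  apply: (@continuousB _ _ _ (fun y => partial j H y * partial m H y)
    (fun y => (j == m)%:R * \sum_l partial l H y * partial l H y)).
    by apply: continuousM; apply: cH.
  apply: continuousM; first exact: cst_continuous.
  by apply: (cont_sum _) => l y; apply: continuousM; apply: cH.
Qed.

Lemma is_derive_gradS_along (x : R -> 'rV[R]_3) (t : R) k :
  is_derive t 1 x (metriplectic_field P H S (x t)) ->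
  is_derive t 1 (fun s => partial k S (x s))
    (\sum_m transport_coef k m (x t) * partial m S (x t)).
Proof.
move=> dx; have dSk := smoothS [:: k] (x t).
rewrite -metriplectic_field_hessian.
by have := is_derive_comp dx dSk; rewrite diff_rowE.
Qed.
End Metriplectic.

Theorem mainTheorem10 (R : realType) (P : 'rV[R]_3 -> 'M[R]_3)
  (H S : 'rV[R]_3 -> R) (I : set R) (x : R -> 'rV[R]_3) (x0 : 'rV[R]_3) :
  poisson_tensor P -> smooth H -> smooth S ->
  (forall y, tensor_apply (P y) (grad S y) = 0) ->
  open I -> is_interval I -> I 0 ->
  (forall t, I t -> is_derive t 1 x (metriplectic_field P H S (x t))) ->
  x 0 = x0 ->
  grad S x0 = 0 ->
  forall t, I t -> grad S (x t) = 0.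
Proof.
move=> [smoothP skewP _] smoothH smoothS PdS0 _ iI I0 dx <- gradS0 t It.
apply/rowP => k; rewrite !mxE.
apply: (@linear_system_vanish _ _ (fun k s => partial k S (x s))
    (fun k m s => transport_coef P H S k m (x s)) _ _ iI I0)
  => // [k' m s Is|k' s Is|k'].
- apply: continuous_comp; last exact: continuous_transport_coef.
  by have [/derivable1_diffP/differentiable_continuous] := dx s Is.
- exact: is_derive_gradS_along (dx s Is).
- by have := congr1 (fun v : 'rV_3 => v 0 k') gradS0; rewrite !mxE.
Qed.
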